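(* Let $r\geqslant 2$ and $n\geqslant 2r-1$. Let $\pi,\beta\in\mathrm{Sym}_n$ with $w_H(\pi)=w_H(\beta)=2r-1$ and $Ts(\pi)=Ts(\beta)$. Suppose $\beta$ has a cycle $(y_1\,y_2\,\ldots\,y_t)$, and $\pi$ is obtained from $\beta$ by replacing this cycle with the two cycles $(y_1\,\ldots\,y_s)$ and $(y_{s+1}\,\ldots\,y_t)$ for some $2\leqslant s\leqslant t-2$, keeping all other cycles of $\beta$. Then $|N_1(\pi)|\geqslant|N_1(\beta)|$ and $|N_2(\pi)|\geqslant|N_2(\beta)|$.
   Context: $\mathrm{Sym}_n$ is the symmetric group on $[n]$, and $w_H(\pi)=|\{i:\pi(i)\neq i\}|$ is the Hamming weight. $Ts(\pi)=\{i:\pi(i)\neq i\}$ and $Tc(\pi)=\{(i,\pi(i)):\pi(i)\neq i\}$. For $\pi$ with $w_H(\pi)=2r-1$, define $N_1(\pi)=\{\sigma\in\mathrm{Sym}_n: Tc(\sigma)\subseteq Tc(\pi),\ |Tc(\sigma)|=r-1\}$, $N_2(\pi)=\{\sigma\in\mathrm{Sym}_n: Tc(\sigma)\subseteq Tc(\pi),\ |Tc(\sigma)|=r\}$, and $N_3(\pi)=\{\sigma\in\mathrm{Sym}_n: |Tc(\sigma)\cap Tc(\pi)|=r-1,\ |Tc(\sigma)|=r\}$. *)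

From mathcomp Require Import all_boot all_fingroup.
Set Implicit Arguments. Unset Strict Implicit. Unset Printing Implicit Defensive.

(* Sym_n is {perm 'I_n}; points of [n] are the ordinals 'I_n (0-indexed). *)

Definition Ts n (p : {perm 'I_n}) : {set 'I_n} := [set i | p i != i].

Definition wH n (p : {perm 'I_n}) : nat := #|Ts p|.

Definition Tc n (p : {perm 'I_n}) : {set 'I_n * 'I_n} :=
  [set ip | (ip.2 == p ip.1) && (p ip.1 != ip.1)].

Definition N1 n (r : nat) (p : {perm 'I_n}) : {set {perm 'I_n}} :=
  [set s : {perm 'I_n} | (Tc s \subset Tc p) && (#|Tc s| == r.-1)].

Definition N2 n (r : nat) (p : {perm 'I_n}) : {set {perm 'I_n}} :=
  [set s : {perm 'I_n} | (Tc s \subset Tc p) && (#|Tc s| == r)].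

Definition N3 n (r : nat) (p : {perm 'I_n}) : {set {perm 'I_n}} :=
  [set s : {perm 'I_n} | (#|Tc s :&: Tc p| == r.-1) && (#|Tc s| == r)].

From mathcomp Require Import all_boot all_fingroup.
From mathcomp Require Import zify.

Set Implicit Arguments.
Unset Strict Implicit.
Unset Printing Implicit Defensive.

(* A permutation sigma with Tc sigma \subset Tc beta is a product of some of
   the cycles of beta: whenever it moves a point it moves the whole beta-cycle
   through it.  Sending such a sigma that contains the cycle (y_1 ... y_t) to
   the permutation acting as pi on that cycle and as sigma elsewhere is an
   injection from the sub-permutations of beta of any given weight into those
   of pi of the same weight, because pi moves every point of the cycle. *)

Definition subperms n (p : {perm 'I_n}) (k : nat) : {set {perm 'I_n}} :=
  [set s : {perm 'I_n} | (Tc s \subset Tc p) && (#|Tc s| == k)].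

Section Porbit.

Variable T : finType.
Implicit Types (s : {perm T}) (x : T).

Lemma porbit_subset s (A : {pred T}) x :
  {homo s : y / y \in A} -> x \in A -> {subset porbit s x <= A}.
Proof. by move=> sA Ax _ /porbitP[i ->]; rewrite permX; elim: i => //= i; apply: sA. Qed.

Lemma porbit_moved s x : 1 < #|porbit s x| -> s x != x.
Proof.
apply: contraTneq => sx; rewrite -leqNgt -(cards1 x); apply: subset_leq_card.
by apply/subsetP => _ /porbitP[i ->]; rewrite permX_fix ?set11.
Qed.

Lemma porbit_nth_cycle s (xs : seq T) x0 :
  0 < size xs ->
  (forall i, i < size xs -> s (nth x0 xs i) = nth x0 xs (i.+1 %% size xs)) ->
  porbit s (nth x0 xs 0) =i xs.
Proof.
move=> xs_gt0 s_xs x; apply/idP/idP => [|xs_x]; last first.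
  have iter_nth i : i < size xs -> (s ^+ i)%g (nth x0 xs 0) = nth x0 xs i.
    elim: i => [_ | i IH lt_i]; first by rewrite expg0 perm1.
    by rewrite expgSr permM IH 1?ltnW // s_xs 1?ltnW // modn_small.
  by rewrite -(nth_index x0 xs_x) -(iter_nth (index x xs)) ?index_mem ?mem_porbit.
apply: porbit_subset; last exact: mem_nth.
move=> _ /(nthP x0)[i lt_i <-].
by rewrite s_xs // mem_nth // ltn_pmod.
Qed.

End Porbit.

Section Subperms.

Variable n : nat.
Implicit Types (s p : {perm 'I_n}) (x y : 'I_n).

Lemma Tc_subsetP s p : reflect (forall x, s x != x -> s x = p x) (Tc s \subset Tc p).
Proof.
apply: (iffP subsetP) => [sp x sx | sp [a b]].
  by have := sp (x, s x); rewrite !inE /= eqxx sx => /(_ isT) /andP[/eqP].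
by rewrite !inE /= => /andP[/eqP -> sa]; rewrite (sp a sa) eqxx -(sp a sa).
Qed.

Lemma card_Tc p : #|Tc p| = #|Ts p|.
Proof.
have -> : Tc p = [set (x, p x) | x in Ts p].
  apply/setP => [[a b]]; rewrite !inE /=; apply/andP/imsetP => [[/eqP -> pa]|].
    by exists a; rewrite ?inE.
  by case=> x; rewrite inE => px [-> ->].
by rewrite card_imset // => a b [].
Qed.

Lemma subperm_moved_next s p x : Tc s \subset Tc p -> s x != x -> s (p x) != p x.
Proof. by move=> /Tc_subsetP sp sx; rewrite -(sp x sx); apply: contra sx => /eqP/perm_inj->. Qed.

Lemma subperm_moved_porbit s p x y :
  Tc s \subset Tc p -> s x != x -> y \in porbit p x -> s y != y.
Proof.
move=> sp sx /porbitP[i ->]; rewrite permX.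
by elim: i => //= i; apply: subperm_moved_next.
Qed.

End Subperms.

Section CycleSplit.

Variables (n : nat) (beta pi : {perm 'I_n}) (y0 : 'I_n).
Implicit Types (s : {perm 'I_n}) (x : 'I_n).

Let Y := porbit beta y0.

Hypothesis pi_stable : forall x, x \in Y -> pi x \in Y.
Hypothesis pi_moved : forall x, x \in Y -> pi x != x.
Hypothesis pi_out : forall x, x \notin Y -> pi x = beta x.

(* [(pi * beta^-1 * s) x = s (beta^-1 (pi x))]: on the cycle Y, where s acts
   as beta, this is [pi x]; off Y, where pi agrees with beta, it is [s x]. *)
Definition swap_cycle s : {perm 'I_n} :=
  if s y0 != y0 then (pi * beta^-1 * s)%g else s.

Lemma subperm_moved_cycle s x :
  Tc s \subset Tc beta -> x \in Y -> (s x != x) = (s y0 != y0).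
Proof.
move=> sb xY; apply/idP/idP => [sx | sy0]; last exact: subperm_moved_porbit sb sy0 xY.
by apply: subperm_moved_porbit sb sx _; rewrite porbit_sym.
Qed.

Lemma swap_cycleE s :
  Tc s \subset Tc beta -> s y0 != y0 ->
  forall x, swap_cycle s x = if x \in Y then pi x else s x.
Proof.
move=> sb sy0 x; rewrite /swap_cycle sy0 !permM.
case: ifP => [xY | /negbT xY]; last by rewrite pi_out // permK.
have bY : (beta^-1)%g (pi x) \in Y.
  rewrite -(eqP (_ : porbit beta (pi x) == Y)) ?eq_porbit_mem ?pi_stable //.
  by rewrite -porbitV (mem_porbit _ 1).
by have /Tc_subsetP-> := sb; rewrite ?permKV // subperm_moved_cycle.
Qed.

Lemma swap_cycle_moved s :
  Tc s \subset Tc beta -> (swap_cycle s y0 != y0) = (s y0 != y0).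
Proof.
move=> sb; case sy0: (s y0 != y0); last by rewrite /swap_cycle sy0.
by rewrite swap_cycleE // porbit_id pi_moved ?porbit_id.
Qed.

Lemma swap_cycle_Ts s : Tc s \subset Tc beta -> Ts (swap_cycle s) = Ts s.
Proof.
move=> sb; case sy0: (s y0 != y0); last by rewrite /swap_cycle sy0.
apply/setP => x; rewrite !inE swap_cycleE //.
by case: ifP => // xY; rewrite pi_moved // subperm_moved_cycle.
Qed.

Lemma swap_cycle_subperm s :
  Tc s \subset Tc beta -> Tc (swap_cycle s) \subset Tc pi.
Proof.
move=> sb; have /Tc_subsetP sbP := sb; apply/Tc_subsetP => x.
case sy0: (s y0 != y0); last first.
  rewrite /swap_cycle sy0 => sx; rewrite sbP // pi_out //.
  by apply: contraFN sy0 => xY; rewrite -(subperm_moved_cycle sb xY).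
by rewrite swap_cycleE //; case: ifP => // /negbT xY sx; rewrite sbP ?pi_out.
Qed.

Lemma card_subperms_swap k : #|subperms beta k| <= #|subperms pi k|.
Proof.
have inj : {in subperms beta k &, injective swap_cycle}.
  move=> a b; rewrite !inE => /andP[ab _] /andP[bb _] e.
  have := congr1 (fun p : {perm 'I_n} => p y0 != y0) e.
  rewrite /= !swap_cycle_moved // => e0; move: e; rewrite /swap_cycle e0.
  by case: ifP => // _; apply: mulgI.
rewrite -(card_in_imset inj); apply/subset_leq_card/subsetP => _ /imsetP[s + ->].
rewrite !inE => /andP[sb k_s].
by rewrite swap_cycle_subperm // card_Tc swap_cycle_Ts // -card_Tc.
Qed.

End CycleSplit.

Theorem lemma11 (n r : nat) (pi beta : {perm 'I_n}) (ys : seq 'I_n) (t s : nat) :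
  2 <= r -> 2 * r - 1 <= n ->
  wH pi = 2 * r - 1 -> wH beta = 2 * r - 1 -> Ts pi = Ts beta ->
  uniq ys -> size ys = t ->
  (forall x0 i, i < t -> beta (nth x0 ys i) = nth x0 ys (i.+1 %% t)) ->
  2 <= s -> s <= t - 2 ->
  (forall x0 i, i < s -> pi (nth x0 ys i) = nth x0 ys (i.+1 %% s)) ->
  (forall x0 i, s <= i < t ->
     pi (nth x0 ys i) = nth x0 ys (s + (i.+1 - s) %% (t - s))) ->
  (forall x, x \notin ys -> pi x = beta x) ->
  #|N1 r beta| <= #|N1 r pi| /\ #|N2 r beta| <= #|N2 r pi|.
Proof.
move=> _ _ _ _ TsE uys <- beta_ys s2 st pi_ys1 pi_ys2 pi_out.
have [x0 _] : exists x0 : 'I_n, True.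
  by case: ys {uys beta_ys pi_ys1 pi_ys2 pi_out} st => [|x0 ?] /= st; [lia | exists x0].
have ys_gt1 : 1 < size ys by lia.
have porbitE := porbit_nth_cycle (ltnW ys_gt1) (beta_ys x0).
set Y := porbit beta _ in porbitE.
have beta_moved x : x \in Y -> beta x != x.
  move=> xY; apply: porbit_moved; move: xY; rewrite -eq_porbit_mem => /eqP->.
  by rewrite (eq_card porbitE) (card_uniqP uys).
have pi_moved x : x \in Y -> pi x != x.
  move=> xY; have := congr1 (fun A : {set 'I_n} => x \in A) TsE.
  by rewrite !inE => ->; apply: beta_moved.
have pi_stable x : x \in Y -> pi x \in Y.
  rewrite !porbitE => xy; rewrite -(nth_index x0 xy).
  move: (index x ys) (index_mem x ys); rewrite xy => i lt_i.
  case: (ltnP i s) => [lt_is | le_si].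
    have le_s : s <= size ys by lia.
    by rewrite pi_ys1 // mem_nth // (leq_trans _ le_s) // ltn_pmod; lia.
  have lt_mod : (i.+1 - s) %% (size ys - s) < size ys - s by rewrite ltn_pmod; lia.
  by rewrite pi_ys2 ?le_si // mem_nth // -ltn_subRL.
have pi_out' x : x \notin Y -> pi x = beta x by rewrite porbitE; apply: pi_out.
by split; exact: (card_subperms_swap pi_stable pi_moved pi_out').
Qed.
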